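(* Let $R$ be a finite principal left ideal ring, $<$ a respectful order on $R$, $B$ an ordered basis of $R^n$, and $P$ a left multiplicative property on $R^n$ with $P[0]$ false. Then each code $C_i$ produced by the greedy algorithm is a free left $R$-module, and the vectors $a_j$ ($j\le i$) selected by the algorithm up to step $i$ form a basis of $C_i$.
   Context: $R^\ast$ is the unit group of $R$. A property $P:R^n\to\{\text{true},\text{false}\}$ is left multiplicative if $P[ux]=P[x]$ for all $u\in R^\ast$, $x\in R^n$. A total order $<$ on $R$ is respectful if for all nonzero $x,y\in R$ with $Rx\supsetneq Ry$ there is $\alpha\in R^\ast$ with $\alpha x<uy$ for all $u\in R^\ast$. Fix an ordered basis $B=(b_1,\dots,b_n)$ of the free left module $R^n$; put $V_0=\{0\}$ and $V_i=Rb_1+\dots+Rb_i$. The lexicographic order on $R^n$: if $x\in V_{i-1}$ and $y\in V_i\setminus V_{i-1}$ then $x<y$; if $x\ne y$ both lie in $V_i\setminus V_{i-1}$, write $x=\sum_{j\le i}x_jb_j$, $y=\sum_{j\le i}y_jb_j$, let $k$ be the largest index with $x_k\ne y_k$, and set $x<y$ iff $x_k<y_k$ in $R$. Fix a set $\Gamma\subseteq R$ containing one generator of each nonzero left ideal of $R$. Greedy algorithm: $C_0=\{0\}$; for $i=1,\dots,n$, let $a_i$ be the smallest vector of $V_i\setminus V_{i-1}$ (if any) such that $P[\gamma a_i+c]$ is true for all $\gamma\in\Gamma$ and all $c\in C_{i-1}$; if such $a_i$ exists (''is selected'') set $C_i=Ra_i+C_{i-1}$, otherwise $C_i=C_{i-1}$.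 The lexicode is $C(<,B,P):=C_n$. *)

From HB Require Import structures.
From mathcomp Require Import all_boot all_order all_algebra.
Set Implicit Arguments. Unset Strict Implicit. Unset Printing Implicit Defensive.
Import Order.TTheory GRing.Theory.
Local Open Scope ring_scope.

Section Lexicodes.
Variable R : finUnitRingType.

Definition lid (x : R) : {set R} := [set r * x | r : R].

Definition left_ideal (I : {set R}) : Prop :=
  0 \in I /\ (forall x y, x \in I -> y \in I -> x + y \in I)
  /\ (forall r x, x \in I -> r * x \in I).

Definition principal_left_ideal_ring : Prop :=
  forall I, left_ideal I -> exists g : R, I = lid g.

Definition strict_total_order (lt : rel R) : Prop :=
  (forall x, ~~ lt x x) /\ (forall x y z, lt x y -> lt y z -> lt x z)
  /\ (forall x y, x != y -> lt x y || lt y x).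

Definition respectful (lt : rel R) : Prop :=
  forall x y : R, x != 0 -> y != 0 -> lid y \proper lid x ->
    exists2 a : R, a \is a GRing.unit &
      forall u : R, u \is a GRing.unit -> lt (a * x) (u * y).

Definition generator_set (Gamma : {set R}) : Prop :=
  (forall g, g \in Gamma -> g != 0) /\
  (forall I, left_ideal I -> I != [set 0] ->
     exists g, [/\ g \in Gamma, lid g = I &
                   forall g', g' \in Gamma -> lid g' = I -> g' = g]).

Variable n : nat.
Notation vec := 'rV[R]_n.

Definition left_multiplicative (P : vec -> bool) : Prop :=
  forall (u : R) (x : vec), u \is a GRing.unit -> P (u *: x) = P x.

Definition lcomb (S : pred 'I_n) (v : 'I_n -> vec) (c : 'I_n -> R) : vec :=
  \sum_(j | S j) c j *: v j.

(* The family (v j)_{j in S} is a basis of the set M (which is then a free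
   left R-module): it spans M and is left linearly independent. *)
Definition is_basis_of (M : {set vec}) (S : pred 'I_n) (v : 'I_n -> vec) : Prop :=
  (forall x, x \in M <-> exists c : 'I_n -> R, x = lcomb S v c) /\
  (forall c : 'I_n -> R, lcomb S v c = 0 -> forall j, S j -> c j = 0).

Variable b : 'I_n -> vec.

(* V_i = R b_1 + ... + R b_i  (paper indices 1..i, here 0-based j < i). *)
Definition inV (i : nat) (x : vec) : bool :=
  [exists c : {ffun 'I_n -> R}, x == \sum_(j < n | (j < i)%N) c j *: b j].

Definition lexlt (lt : rel R) (x y : vec) : Prop :=
  (exists i : nat, [/\ (1 <= i <= n)%N, inV i.-1 x, inV i y & ~~ inV i.-1 y])
  \/
  (exists i : nat, [/\ (1 <= i <= n)%N, inV i x && ~~ inV i.-1 x,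
      inV i y && ~~ inV i.-1 y, x != y &
      exists cx cy : 'I_n -> R,
        [/\ x = \sum_(j < n | (j < i)%N) cx j *: b j,
            y = \sum_(j < n | (j < i)%N) cy j *: b j &
            exists k : 'I_n, [/\ (k < i)%N, cx k != cy k,
               (forall j : 'I_n, (k < j < i)%N -> cx j = cy j) & lt (cx k) (cy k)]]]).

Definition addline (a : vec) (C : {set vec}) : {set vec} :=
  [set x | [exists r : R, [exists c in C, x == r *: a + c]]].

(* Specification of a run of the greedy algorithm: a i is the vector selected
   at (paper) step i+1 (None if none is selected), C i is the code C_i. *)
Definition greedy_run (lt : rel R) (P : vec -> bool) (Gamma : {set R})
    (a : 'I_n -> option vec) (C : nat -> {set vec}) : Prop :=
  C 0%N = [set 0] /\
  forall i : 'I_n,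
    let cand v := [&& inV i.+1 v, ~~ inV i v &
                     [forall g in Gamma, [forall c in C i, P (g *: v + c)]]] in
    match a i with
    | Some v => [/\ cand v, (forall w, cand w -> w != v -> lexlt lt v w)
                  & C i.+1 = addline v (C i)]
    | None => (forall w, ~~ cand w) /\ C i.+1 = C i
    end.

End Lexicodes.

From HB Require Import structures.
From mathcomp Require Import all_boot all_order all_algebra.
Import GRing.Theory.
Local Open Scope ring_scope.

(* When a vector w is selected, C_{i+1} = R w + C_i
   is spanned by the old basis and w, and independence reduces to showing that
   r w in C_i forces r = 0.  Otherwise {r | r w in C_i} is a nonzero left
   ideal, so it contains some g in Gamma; then g w - g w = 0 is among the
   vectors g w + c (c in C_i) tested by the algorithm, contradicting P[0]
   false. *)

Section GreedyBasis.
Set Implicit Arguments. Unset Strict Implicit.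
Variables (R : finUnitRingType) (n : nat).
Implicit Types (S : pred 'I_n) (v : 'I_n -> 'rV[R]_n) (c d : 'I_n -> R).

Lemma lcomb0 S v : lcomb S v (fun _ => 0) = 0.
Proof. by rewrite /lcomb big1 // => j _; rewrite scale0r. Qed.

Lemma lcombD S v c d : lcomb S v c + lcomb S v d = lcomb S v (fun j => c j + d j).
Proof. by rewrite /lcomb -big_split; apply: eq_bigr => j _; rewrite scalerDl. Qed.

Lemma lcombZ S v c r : r *: lcomb S v c = lcomb S v (fun j => r * c j).
Proof. by rewrite /lcomb scaler_sumr; apply: eq_bigr => j _; rewrite scalerA. Qed.

Lemma eq_lcomb S v c d : {in S, c =1 d} -> lcomb S v c = lcomb S v d.
Proof. by move=> eq_cd; apply: eq_bigr => j /eq_cd ->. Qed.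

Lemma eq_lcomb_pred S1 S2 v c : S1 =1 S2 -> lcomb S1 v c = lcomb S2 v c.
Proof. by move=> eqS; apply: eq_bigl. Qed.

Lemma lcomb_predU1 S v c i : ~~ S i ->
  lcomb [pred j | (j == i) || S j] v c = c i *: v i + lcomb S v c.
Proof.
move=> Si; rewrite /lcomb (bigD1 i) /= ?eqxx //; congr (_ + _).
by apply: eq_bigl => j; case: (eqVneq j i) => [->|] /=; rewrite ?(negbTE Si) ?andbT.
Qed.

Definition left_submodule (M : {set 'rV[R]_n}) : Prop :=
  0 \in M /\ (forall x y, x \in M -> y \in M -> x + y \in M)
  /\ (forall r x, x \in M -> r *: x \in M).

Lemma basis_left_submodule M S v : is_basis_of M S v -> left_submodule M.
Proof.
case=> span _; split; first by apply/span; exists (fun _ => 0); rewrite lcomb0.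
split=> [x y /span[c ->] /span[d ->] | r x /span[c ->]]; apply/span.
  by exists (fun j => c j + d j); rewrite lcombD.
by exists (fun j => r * c j); rewrite lcombZ.
Qed.

Lemma left_ideal_coef M (w : 'rV[R]_n) :
  left_submodule M -> left_ideal [set r | r *: w \in M].
Proof.
case=> M0 [MD MZ]; split; first by rewrite inE scale0r.
split=> [x y | r x]; rewrite !inE; first by rewrite scalerDl; apply: MD.
by rewrite -scalerA; apply: MZ.
Qed.

Lemma is_basis_of_eq_pred M S1 S2 v :
  S1 =1 S2 -> is_basis_of M S1 v -> is_basis_of M S2 v.
Proof.
move=> eqS [span free]; split=> [x | c].
  split=> [/span[c ->] | [c ->]]; last apply/span; exists c;
  by rewrite (eq_lcomb_pred _ _ eqS).
by rewrite -(eq_lcomb_pred _ _ eqS) => /free free_c j; rewrite -eqS; apply: free_c.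
Qed.

Lemma is_basis_of_set0 S v : S =1 pred0 -> is_basis_of [set 0] S v.
Proof.
move=> S0; have lcomb_pred0 c : lcomb S v c = 0.
  by rewrite (eq_lcomb_pred _ _ S0) /lcomb big_pred0.
split=> [x | c _ j]; last by rewrite S0.
rewrite in_set1; split=> [/eqP -> | [c ->]]; last by rewrite lcomb_pred0.
by exists (fun _ => 0); rewrite lcomb_pred0.
Qed.

Lemma is_basis_of_addline M S v i :
  ~~ S i -> is_basis_of M S v -> (forall r, r *: v i \in M -> r = 0) ->
  is_basis_of (addline (v i) M) [pred j | (j == i) || S j] v.
Proof.
move=> Si basisM free_vi; have [span free] := basisM.
have [_ [_ MZ]] := basis_left_submodule basisM.
have lcomb_addline c : lcomb [pred j | (j == i) || S j] v c =
                       c i *: v i + lcomb S v c by rewrite lcomb_predU1.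
split=> [x | c].
  rewrite inE; split.
    case/existsP=> r /existsP[m /andP[/span[d ->] /eqP ->]].
    exists (fun j => if j == i then r else d j); rewrite lcomb_addline eqxx.
    congr (_ + _); apply: eq_lcomb => j Sj.
    by have /negbTE -> : j != i by apply: contraNneq Si => <-.
  case=> c ->; apply/existsP; exists (c i); apply/existsP.
  by exists (lcomb S v c); rewrite lcomb_addline eqxx andbT; apply/span; exists c.
rewrite lcomb_addline => /eqP; rewrite addr_eq0 => /eqP ci_vi.
have ci0 : c i = 0.
  by apply: free_vi; rewrite ci_vi -scaleN1r MZ //; apply/span; exists c.
move: ci_vi; rewrite ci0 scale0r => /esym/eqP; rewrite oppr_eq0 => /eqP /free.
by move=> free_c j /orP[/eqP -> | /free_c].
Qed.

Lemma greedy_candidate_coef_eq0 (P : 'rV[R]_n -> bool) (Gamma : {set R})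
    (M : {set 'rV[R]_n}) (w : 'rV[R]_n) :
  generator_set Gamma -> P 0 = false -> left_submodule M ->
  [forall g in Gamma, [forall c in M, P (g *: w + c)]] ->
  forall r, r *: w \in M -> r = 0.
Proof.
move=> [_ genG] P0 subM Pw r rw; case: (eqVneq r 0) => // r_neq0; exfalso.
have [_ [_ MZ]] := subM.
have ideal_neq0 : [set s | s *: w \in M] != [set 0].
  by apply: contraNneq r_neq0 => eq0; rewrite -in_set1 -eq0 inE.
have [g [gG lid_g _]] := genG _ (left_ideal_coef w subM) ideal_neq0.
have : g \in [set s | s *: w \in M].
  by rewrite -lid_g; apply/imsetP; exists 1; rewrite ?mul1r.
rewrite inE => gw.
move/forallP/(_ g)/implyP/(_ gG)/forallP/(_ (- (g *: w))): Pw.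
by rewrite -scaleN1r MZ // scaleN1r subrr P0.
Qed.

End GreedyBasis.

Theorem mainTheorem9 (R : finUnitRingType) (lt : rel R) (n : nat)
    (b : 'I_n -> 'rV[R]_n) (P : 'rV[R]_n -> bool) (Gamma : {set R})
    (a : 'I_n -> option 'rV[R]_n) (C : nat -> {set 'rV[R]_n}) :
  principal_left_ideal_ring R ->
  strict_total_order lt -> respectful lt ->
  is_basis_of [set: 'rV[R]_n] predT b ->
  left_multiplicative P -> P 0 = false ->
  generator_set Gamma ->
  greedy_run b lt P Gamma a C ->
  forall i : nat, (i <= n)%N ->
    is_basis_of (C i) (fun j : 'I_n => (j < i)%N && (a j != None))
                (fun j => odflt 0 (a j)).
Proof.
move=> _ _ _ _ _ P0 genG [C0 greedy_step] i.
elim: i => [_ | i IH lt_in]; first by rewrite C0; apply: is_basis_of_set0.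
have basis_i := IH (ltnW lt_in); pose io := Ordinal lt_in.
have sel_step (j : 'I_n) : ((j < i.+1)%N && (a j != None)) =
                  ((j == io) && (a io != None)) || ((j < i)%N && (a j != None)).
  rewrite ltnS leq_eqVlt -[(j : nat) == i]/(j == io).
  by case: eqVneq => [->|] //=; rewrite ltnn orbF.
case E: (a io) (greedy_step io) sel_step => [w|] /= step sel_step; last first.
  case: step => _ ->; apply: is_basis_of_eq_pred basis_i => j.
  by rewrite sel_step andbF.
case: step => /and3P[_ _ Pw] _ ->.
have eq_sel : [pred j | (j == io) || ((j < i)%N && (a j != None))] =1
              (fun j : 'I_n => (j < i.+1)%N && (a j != None)).
  by move=> j; rewrite sel_step andbT.
apply: is_basis_of_eq_pred eq_sel _.
have -> : w = odflt 0 (a io) by rewrite E.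
apply: (is_basis_of_addline _ basis_i); first by rewrite /= ltnn.
rewrite E; exact: greedy_candidate_coef_eq0 genG P0 (basis_left_submodule basis_i) Pw.
Qed.
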